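(* Let $\Gamma\subseteq\Lambda^+$ be reflective, with $S\subseteq\mathbb Z\Gamma$, $E(\Gamma)$ part of a basis of $(\mathbb Z\Gamma)^*$, and $\mathbb Z\Gamma$ $W$-invariant. Let $\alpha\in S$. Then $a(\alpha)$ consists of exactly two elements $\delta_1,\delta_2$, both lying in $E(\Gamma)$, with $\alpha^\vee|_{\mathbb Z\Gamma}=\delta_1+\delta_2$; moreover, every $\delta\in E(\Gamma)$ with $\langle\delta,\alpha\rangle>0$ satisfies $\langle\delta,\alpha\rangle=1$.
   Context: $G$: complex connected reductive group with Borel $B$, maximal torus $T$, weight lattice $\Lambda$, dominant weights $\Lambda^+$, simple roots $S$, Weyl group $W$ (acting on $\Lambda$ and dually), coroots $\alpha^\vee\in\mathrm{Hom}(\Lambda,\mathbb Z)$. A finitely generated $\Gamma\subseteq\Lambda^+$ is normal if $\mathbb Z\Gamma\cap\mathbb Q_{\ge0}\Gamma=\Gamma$. $\Gamma$ is reflective if it is normal and (1) $\mathrm{rk}\,\mathbb Z\Gamma=\mathrm{rk}\,\Lambda$; (2) the set of hyperplanes spanned by the codimension-1 faces of the cone $\mathbb Q_{\ge0}\Gamma$ is $W$-stable; (3) every codimension-1 face of $\mathbb Q_{\ge0}\Gamma$ meets the open positive Weyl chamber. $\Gamma^\vee=\{v\in\mathrm{Hom}_{\mathbb Z}(\mathbb Z\Gamma,\mathbb Q):\langle v,\gamma\rangle\ge0\ \forall\gamma\in\Gamma\}$; $E(\Gamma)$ is the set of primitive elements of $(\mathbb Z\Gamma)^*$ spanning extremal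 rays of $\Gamma^\vee$. For $\alpha\in S\cap\mathbb Z\Gamma$, $a(\alpha)=\{\delta\in(\mathbb Z\Gamma)^*:\langle\delta,\alpha\rangle=1,\ \delta\in E(\Gamma)\text{ or }\alpha^\vee|_{\mathbb Z\Gamma}-\delta\in E(\Gamma)\}$. *)

(* Model of a complex connected reductive group G with
   Borel B and maximal torus T through its based root datum:
   Lambda = Z^n sitting inside Q^n (row vectors), the dual lattice
   Hom(Lambda,Z) = Z^n paired by the dot product, simple roots alpha i
   and simple coroots coalpha i (i : 'I_r). *)
From HB Require Import structures.
From mathcomp Require Import all_boot all_order all_algebra.
Set Implicit Arguments. Unset Strict Implicit. Unset Printing Implicit Defensive.
Import Order.TTheory GRing.Theory Num.Theory.
Local Open Scope ring_scope.

Section RootDatum.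
Variable n : nat.
Local Notation vec := 'rV[rat]_n.

Definition wpair (u x : vec) : rat := \sum_(j < n) u ord0 j * x ord0 j.

Definition is_int (q : rat) : Prop := exists z : int, q = z%:~R.
Definition integral (x : vec) : Prop := forall j, is_int (x ord0 j).

Variable r : nat.
Variables alpha coalpha : 'I_r -> vec.

(* simple reflection s_i, acting on row vectors by x |-> x *m refl_mx i,
   i.e. x |-> x - <coalpha i, x> alpha i *)
Definition refl_mx (i : 'I_r) : 'M[rat]_n := 1%:M - (coalpha i)^T *m alpha i.

Inductive weyl : 'M[rat]_n -> Prop :=
| weyl1 : weyl 1%:M
| weylS (i : 'I_r) (w : 'M[rat]_n) : weyl w -> weyl (refl_mx i *m w).

(* (alpha, coalpha) is the based root datum of a connected reductive group:
   integral simple (co)roots, Cartan matrix a generalized Cartan matrix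
   of finite type (finite Weyl group), simple roots and coroots linearly
   independent. *)
Definition based_root_datum : Prop :=
  (forall i, integral (alpha i) /\ integral (coalpha i)) /\
  (forall i, wpair (coalpha i) (alpha i) = 2) /\
  (forall i j, i != j -> wpair (coalpha i) (alpha j) <= 0) /\
  (forall i j, wpair (coalpha i) (alpha j) = 0 <-> wpair (coalpha j) (alpha i) = 0) /\
  row_free (\matrix_(i < r) alpha i) /\
  row_free (\matrix_(i < r) coalpha i) /\
  (exists ws : seq 'M[rat]_n, forall w, weyl w -> w \in ws).

Definition dominant (x : vec) : Prop :=
  integral x /\ forall i, 0 <= wpair (coalpha i) x.

Definition open_chamber (x : vec) : Prop := forall i, 0 < wpair (coalpha i) x.

(* Gamma = the monoid generated by g 0, ..., g (k-1) *)
Variable k : nat.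
Variable g : 'I_k -> vec.

Definition inGamma (x : vec) : Prop :=
  exists m : 'I_k -> nat, x = \sum_(j < k) (m j)%:R *: g j.
Definition inZG (x : vec) : Prop :=
  exists z : 'I_k -> int, x = \sum_(j < k) (z j)%:~R *: g j.
Definition inQG (x : vec) : Prop :=
  exists q : 'I_k -> rat, (forall j, 0 <= q j) /\ x = \sum_(j < k) q j *: g j.

Definition normal_monoid : Prop :=
  forall x, inZG x -> inQG x -> inGamma x.

Definition cone_face (F : vec -> Prop) : Prop :=
  exists u : vec, (forall x, inQG x -> 0 <= wpair u x) /\
    (forall x, F x <-> (inQG x /\ wpair u x = 0)).

Definition lspan (F : vec -> Prop) (x : vec) : Prop :=
  exists (m : nat) (c : 'I_m -> rat) (f : 'I_m -> vec),
    (forall j, F (f j)) /\ x = \sum_(j < m) c j *: f j.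

Definition has_dim (F : vec -> Prop) (d : nat) : Prop :=
  (exists M : 'M[rat]_(d, n), (forall j, F (row j M)) /\ \rank M = d) /\
  (forall M : 'M[rat]_(d.+1, n), (forall j, F (row j M)) -> (\rank M <= d)%N).

Definition facet (F : vec -> Prop) : Prop :=
  cone_face F /\ exists d, d.+1 = n /\ has_dim F d.

Definition reflective : Prop :=
  normal_monoid /\
  \rank (\matrix_(j < k) g j) = n /\
  (forall w, weyl w -> forall F, facet F ->
     exists F', facet F' /\
       forall x, lspan F' x <-> exists y, lspan F y /\ x = y *m w) /\
  (forall F, facet F -> exists x, F x /\ open_chamber x).

(* Since rk Z Gamma = n, Hom(Z Gamma, Q) is identified with Q^n via the
   pairing; (Z Gamma)^* = Hom(Z Gamma, Z) is then the following lattice. *)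
Definition inLdual (v : vec) : Prop := forall x, inZG x -> is_int (wpair v x).

Definition inGdual (v : vec) : Prop := forall x, inGamma x -> 0 <= wpair v x.

Definition extremal_ray_gen (v : vec) : Prop :=
  inGdual v /\ v != 0 /\
  forall a b, inGdual a -> inGdual b -> a + b = v ->
    exists c : rat, 0 <= c /\ a = c *: v.

Definition primitive_dual (v : vec) : Prop :=
  inLdual v /\ v != 0 /\
  forall (w : vec) (m : nat), inLdual w -> v = m%:R *: w -> m = 1%N.

Definition inEG (v : vec) : Prop := primitive_dual v /\ extremal_ray_gen v.

Definition E_part_of_basis : Prop :=
  exists B : 'M[rat]_n,
    (forall i, inLdual (row i B)) /\ row_free B /\
    (forall v, inLdual v -> exists c : 'I_n -> int,
        v = \sum_(i < n) (c i)%:~R *: row i B) /\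
    (forall v, inEG v -> exists i, v = row i B).

Definition ZG_W_invariant : Prop :=
  forall w, weyl w -> forall x, inZG x -> inZG (x *m w).

Definition in_a (i : 'I_r) (d : vec) : Prop :=
  inLdual d /\ wpair d (alpha i) = 1 /\ (inEG d \/ inEG (coalpha i - d)).

End RootDatum.

(* Since Gamma is dominant, alpha^vee lies in the dual cone Gamma^vee, and
   moving along faces of Gamma^vee from alpha^vee one reaches an extremal ray
   delta in E(Gamma) with m := <delta, alpha> > 0.  The simple reflection s_alpha
   maps the facet delta^perp of Q_{>=0} Gamma onto another facet; its inner
   normal is proportional to m alpha^vee - delta, so m alpha^vee = delta + t delta'
   with delta' in E(Gamma) and t > 0.  As E(Gamma) is part of a basis of
   (Z Gamma)^* and alpha^vee is integral, comparing coordinates of alpha^vee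
   in that basis gives m c = 1 and m c' = t with integers c, c'; hence m = 1,
   and <t delta', alpha> = 2 - 1 forces t = 1.  So alpha^vee = delta + delta',
   and linear independence of E(Gamma) shows that this is the only way to
   write alpha^vee as a sum of two distinct elements of E(Gamma). *)
Set Warnings "-notation-overridden -ambiguous-paths -notation-incompatible-prefix".
From HB Require Import structures.
From mathcomp Require Import all_boot all_order all_algebra.
From mathcomp Require Import ring lra zify.
From Stdlib Require Import Classical.
Import Order.TTheory GRing.Theory Num.Theory.
Local Open Scope ring_scope.
Set Implicit Arguments. Unset Strict Implicit. Unset Printing Implicit Defensive.

Section Pairing.
Variable n : nat.
Implicit Types u v x y : 'rV[rat]_n.

Lemma wpairE u x : wpair u x = (u *m x^T) 0 0.
Proof. by rewrite /wpair !mxE; apply: eq_bigr => j _; rewrite !mxE. Qed.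

Lemma wpairC u x : wpair u x = wpair x u.
Proof. by rewrite /wpair; apply: eq_bigr => j _; rewrite mulrC. Qed.

Lemma wpairDl u v x : wpair (u + v) x = wpair u x + wpair v x.
Proof. by rewrite /wpair -big_split; apply: eq_bigr => j _; rewrite mxE mulrDl. Qed.

Lemma wpairZl a u x : wpair (a *: u) x = a * wpair u x.
Proof. by rewrite /wpair mulr_sumr; apply: eq_bigr => j _; rewrite mxE mulrA. Qed.

Lemma wpairNl u x : wpair (- u) x = - wpair u x.
Proof. by rewrite -scaleN1r wpairZl mulN1r. Qed.

Lemma wpairBl u v x : wpair (u - v) x = wpair u x - wpair v x.
Proof. by rewrite wpairDl wpairNl. Qed.

Lemma wpair0l x : wpair 0 x = 0.
Proof. by rewrite -(scale0r 0) wpairZl mul0r. Qed.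

Lemma wpairDr u x y : wpair u (x + y) = wpair u x + wpair u y.
Proof. by rewrite !(wpairC u) wpairDl. Qed.

Lemma wpairZr a u x : wpair u (a *: x) = a * wpair u x.
Proof. by rewrite !(wpairC u) wpairZl. Qed.

Lemma wpairBr u x y : wpair u (x - y) = wpair u x - wpair u y.
Proof. by rewrite !(wpairC u) wpairBl. Qed.

Lemma wpair0r u : wpair u 0 = 0.
Proof. by rewrite wpairC wpair0l. Qed.

Lemma wpair_sumr m u (f : 'I_m -> 'rV[rat]_n) :
  wpair u (\sum_(j < m) f j) = \sum_(j < m) wpair u (f j).
Proof.
elim/big_rec2: _ => [|j a b _ <-]; first by rewrite wpair0r.
by rewrite wpairDr.
Qed.

Lemma sub_kermx_wpairP d (M : 'M[rat]_(d, n)) y :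
  reflect (forall j, wpair y (row j M) = 0) (y <= kermx M^T)%MS.
Proof.
apply: (iffP sub_kermxP) => [H j | H].
  have := congr1 (fun A : 'M[rat]_(1, d) => A 0 j) H; rewrite !mxE => <-.
  by rewrite /wpair; apply: eq_bigr => l _; rewrite !mxE.
apply/rowP => j; rewrite [RHS]mxE -(H j) mxE /wpair; apply: eq_bigr => l _.
by rewrite !mxE.
Qed.

Lemma mxrank_kermx_tr d (M : 'M[rat]_(d, n)) : \rank (kermx M^T) = (n - \rank M)%N.
Proof. by rewrite mxrank_ker mxrank_tr. Qed.

Lemma rank1_sub_scale u v (K : 'M[rat]_n) :
  (u <= K)%MS -> u != 0 -> (\rank K <= 1)%N -> (v <= K)%MS -> exists c, v = c *: u.
Proof.
move=> uK u0 rK vK.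
have Ku : (K <= u)%MS.
  case: (mxrank_leqif_sup uK) => _ <-.
  move: (mxrankS uK) rK; rewrite rank_rV u0 /= => h1 h2; apply/eqP; lia.
have /submxP [D ->] := submx_trans vK Ku.
by exists (D 0 0); rewrite {1}[D]mx11_scalar mul_scalar_mx.
Qed.

End Pairing.

Lemma is_int_intr (z : int) : is_int z%:~R. Proof. by exists z. Qed.

Lemma is_intD a b : is_int a -> is_int b -> is_int (a + b).
Proof. by move=> [x ->] [y ->]; exists (x + y); rewrite rmorphD. Qed.

Lemma is_intM a b : is_int a -> is_int b -> is_int (a * b).
Proof. by move=> [x ->] [y ->]; exists (x * y); rewrite rmorphM. Qed.

Lemma is_int_sum m (f : 'I_m -> rat) :
  (forall j, is_int (f j)) -> is_int (\sum_(j < m) f j).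
Proof. by move=> H; elim/big_rec: _ => [|j a _ Ha]; [exists 0 | exact: is_intD]. Qed.

Lemma is_int_mul_eq1 a b : is_int a -> is_int b -> 0 < a -> a * b = 1 -> a = 1.
Proof.
move=> [x ->] [y ->]; rewrite ltr0z -rmorphM /= -[1]/(1%:~R) => x0 /intr_inj xy.
have /eqP := congr1 absz xy; rewrite abszM muln_eq1 => /andP [/eqP x1 _].
by rewrite -(gtz0_abs x0) x1.
Qed.

Lemma exists_pos_lower_bound m (P : 'I_m -> rat) :
  (forall j, 0 < P j) -> exists t, 0 < t /\ forall j, t <= P j.
Proof.
elim: m P => [|m IH] P HP; first by exists 1; split => // [[]].
have [t [t0 Ht]] := IH (fun j => P (lift ord0 j)) (fun j => HP _).
exists (Num.min t (P ord0)); split; first by rewrite lt_min t0 HP.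
by move=> j; case: (unliftP ord0 j) => [j'|] ->; rewrite ge_min ?Ht ?lexx ?orbT.
Qed.

Lemma integral_multiple n (u : 'rV[rat]_n) :
  exists z : int, 0 < z /\ integral (z%:~R *: u).
Proof.
exists (\prod_(l < n) denq (u 0 l)); split.
  by apply: prodr_gt0 => l _; apply: denq_gt0.
move=> l; rewrite mxE (bigD1 l) //=.
exists (numq (u 0 l) * \prod_(m < n | m != l) denq (u 0 m)).
rewrite !rmorphM /= mulrAC; congr (_ * _).
rewrite -[X in _ * X = _](divq_num_den (u 0 l)) mulrCA mulfV ?mulr1 //.
by rewrite intr_eq0 gt_eqF // denq_gt0.
Qed.

Section DualCone.
Variables (n k : nat) (g : 'I_k -> 'rV[rat]_n).
Implicit Types u v x y : 'rV[rat]_n.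

Lemma inGamma_gen j : inGamma g (g j).
Proof.
exists (fun l => nat_of_bool (l == j)); rewrite (bigD1 j) //= eqxx scale1r big1 ?addr0 //.
by move=> l /negbTE ->; rewrite scale0r.
Qed.

Lemma inQG_gen j : inQG g (g j).
Proof.
exists (fun l => (l == j)%:R); split => [l|]; first by case: (l == j).
rewrite (bigD1 j) //= eqxx scale1r big1 ?addr0 //.
by move=> l /negbTE ->; rewrite scale0r.
Qed.

Lemma inQG0 : inQG g 0.
Proof. by exists (fun _ => 0); split => [//|]; rewrite big1 // => j _; rewrite scale0r. Qed.

Lemma inGamma_inQG x : inGamma g x -> inQG g x.
Proof. by move=> [m ->]; exists (fun j => (m j)%:R); split => // j; rewrite ler0n. Qed.

Lemma inGdualP u : inGdual g u <-> forall j, 0 <= wpair u (g j).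
Proof.
split=> [H j | H x [m ->]]; first exact/H/inGamma_gen.
rewrite wpair_sumr; apply: sumr_ge0 => j _; rewrite wpairZr.
by apply: mulr_ge0 => //; rewrite ler0n.
Qed.

Lemma inGdual_wpair_ge0 u x : inGdual g u -> inQG g x -> 0 <= wpair u x.
Proof.
move=> /inGdualP H [q [q0 ->]]; rewrite wpair_sumr; apply: sumr_ge0 => j _.
by rewrite wpairZr mulr_ge0.
Qed.

Lemma inGdualZ c u : 0 <= c -> inGdual g u -> inGdual g (c *: u).
Proof. by move=> c0 /inGdualP H; apply/inGdualP => j; rewrite wpairZl mulr_ge0. Qed.

Hypothesis rank_gen : \rank (\matrix_(j < k) g j) = n.

Lemma wpair_gen_eq0 v : (forall j, wpair v (g j) = 0) -> v = 0.
Proof.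
move=> H.
have : (v <= kermx (\matrix_(j < k) g j)^T)%MS.
  by apply/sub_kermx_wpairP => j; rewrite rowK.
have /eqP -> : kermx (\matrix_(j < k) g j)^T == 0.
  by rewrite -mxrank_eq0 mxrank_kermx_tr rank_gen subnn.
by rewrite submx0 => /eqP.
Qed.

Lemma exists_wpair_gen_neq0 v : v != 0 -> exists j, wpair v (g j) != 0.
Proof.
move=> v0; case: (pickP [pred j | wpair v (g j) != 0]) => [j Hj|H]; first by exists j.
by move: v0; rewrite (@wpair_gen_eq0 v) ?eqxx // => j; apply/eqP/negbFE/H.
Qed.

Lemma inGdual_pointed u : inGdual g u -> inGdual g (- u) -> u = 0.
Proof.
move=> /inGdualP H1 /inGdualP H2; apply: wpair_gen_eq0 => j.
apply/eqP; rewrite eq_le H1 andbT.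
by have := H2 j; rewrite wpairNl oppr_ge0.
Qed.

End DualCone.

Section ExtremalRays.
Variables (n k : nat) (g : 'I_k -> 'rV[rat]_n).
Implicit Types u v x y : 'rV[rat]_n.

Lemma extremalZ c u : 0 < c -> extremal_ray_gen g u -> extremal_ray_gen g (c *: u).
Proof.
move=> c0 [Gu [u0 Hext]]; have c0' : c != 0 by rewrite gt_eqF.
split; first by apply: inGdualZ => //; apply: ltW.
split; first by rewrite scaler_eq0 negb_or u0 c0'.
move=> a b Ga Gb Eab.
have cV0 : 0 <= c^-1 by rewrite invr_ge0 ltW.
have E' : c^-1 *: a + c^-1 *: b = u by rewrite -scalerDr Eab scalerA mulVf // scale1r.
have [d [d0 Ed]] := Hext _ _ (inGdualZ cV0 Ga) (inGdualZ cV0 Gb) E'.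
exists d; split => //.
by rewrite scalerA mulrC -scalerA -Ed scalerA mulfV // scale1r.
Qed.

Definition zero_gen_mx u : 'M[rat]_(k, n) :=
  \matrix_(j < k) (if wpair u (g j) == 0 then g j else 0).

Lemma zero_gen_mx_rows u j :
  inQG g (row j (zero_gen_mx u)) /\ wpair u (row j (zero_gen_mx u)) = 0.
Proof.
rewrite rowK; case: eqP => [H|_]; first by split => //; apply: inQG_gen.
by split; [apply: inQG0 | rewrite wpair0r].
Qed.

Lemma sub_kermx_zero_gen u v :
  (v <= kermx (zero_gen_mx u)^T)%MS ->
  forall j, wpair u (g j) = 0 -> wpair v (g j) = 0.
Proof. by move=> /sub_kermx_wpairP vK j uj; have := vK j; rewrite rowK uj eqxx. Qed.

Lemma inGdual_perturb u v : inGdual g u ->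
  (forall j, wpair u (g j) = 0 -> wpair v (g j) = 0) ->
  exists t, 0 < t /\ inGdual g (u + t *: v) /\ inGdual g (u - t *: v).
Proof.
move=> /inGdualP Gu vt.
have [t [t0 Ht]] : exists t, 0 < t /\ forall j,
    t <= (if wpair u (g j) == 0 then 1 else wpair u (g j) / (1 + `|wpair v (g j)|)).
  apply: exists_pos_lower_bound => j; case: ifP => // /negbT nz.
  by rewrite divr_gt0 ?ltr_pwDl ?normr_ge0 // lt_def nz Gu.
have bound j s : s = 1 \/ s = -1 -> 0 <= wpair u (g j) + s * t * wpair v (g j).
  move=> Hs; case: (eqVneq (wpair u (g j)) 0) => [z|nz].
    by rewrite z vt // mulr0 addr0.
  have up : 0 < wpair u (g j) by rewrite lt_def nz Gu.
  have := Ht j; rewrite (negbTE nz) ler_pdivlMr ?ltr_pwDl ?normr_ge0 //.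
  have h1 := ler_norm (wpair v (g j)); have h2 := ler_norm (- wpair v (g j)).
  rewrite normrN in h2; have h3 := normr_ge0 (wpair v (g j)).
  set V := wpair v (g j) in h1 h2 h3 *; set U := wpair u (g j) in up *.
  by case: Hs => -> ; nra.
exists t; split => //; split; apply/inGdualP => j.
  by rewrite wpairDl wpairZl; have := bound j 1 (or_introl erefl); rewrite mul1r.
by rewrite wpairBl wpairZl; have := bound j (-1) (or_intror erefl); rewrite mulN1r mulNr.
Qed.

Lemma kermx_zero_gen_rank u :
  extremal_ray_gen g u -> (\rank (kermx (zero_gen_mx u)^T) <= 1)%N.
Proof.
move=> [Gu [u0 Hext]]; rewrite leqNgt; apply/negP => rK.
have nKu : ~~ (kermx (zero_gen_mx u)^T <= u)%MS.
  by apply/negP => /mxrankS; rewrite rank_rV; move: rK; case: (u != 0) => /=; lia.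
have [i Hi] := row_subPn nKu; set v := row i _ in Hi.
have [t [t0 [Ga Gb]]] := inGdual_perturb Gu (sub_kermx_zero_gen (row_sub i _)).
have half0 : 0 <= 1 / 2 :> rat by [].
have Eab : (1/2) *: (u + t *: v) + (1/2) *: (u - t *: v) = u.
  by apply/rowP => l; rewrite !mxE; field.
have [c [_ Ec]] := Hext _ _ (inGdualZ half0 Ga) (inGdualZ half0 Gb) Eab.
move: Hi; rewrite (_ : v = ((c - 1/2) * 2 / t) *: u) ?scalemx_sub ?submx_refl //.
apply/rowP => l; have := congr1 (fun A : 'rV[rat]_n => A 0 l) Ec; rewrite !mxE => E.
apply: (mulfI (lt0r_neq0 t0)).
have -> : t * ((c - 1/2) * 2 / t * u 0 l) = (c - 1/2) * 2 * u 0 l.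
  by field; exact: lt0r_neq0.
nra.
Qed.

Hypothesis rank_gen : \rank (\matrix_(j < k) g j) = n.

Lemma extremal_of_kermx_rank d (M : 'M[rat]_(d, n)) u :
  inGdual g u -> u != 0 ->
  (forall j, inQG g (row j M) /\ wpair u (row j M) = 0) ->
  (\rank (kermx M^T) <= 1)%N -> extremal_ray_gen g u.
Proof.
move=> Gu u0 HM rK; split; [done | split; first done].
move=> a b Ga Gb Eab.
have uK : (u <= kermx M^T)%MS by apply/sub_kermx_wpairP => j; case: (HM j).
have aK : (a <= kermx M^T)%MS.
  apply/sub_kermx_wpairP => j; case: (HM j) => Qj; rewrite -Eab wpairDl => H0.
  have := inGdual_wpair_ge0 Ga Qj; have := inGdual_wpair_ge0 Gb Qj; lra.
have [c Ec] := rank1_sub_scale uK u0 rK aK.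
exists c; split => //; rewrite leNgt; apply/negP => c0.
have Gnu : inGdual g (- u).
  have -> : - u = (- c^-1) *: a by rewrite Ec scalerA mulNr mulVf ?lt_eqF // scaleN1r.
  by apply: inGdualZ => //; rewrite oppr_ge0 invr_le0 ltW.
by move: u0; rewrite (inGdual_pointed rank_gen Gu Gnu) eqxx.
Qed.

(* Carathéodory-type descent: push [u] along a direction of the face
   {a}^perp until one more generator becomes orthogonal to it. *)
Lemma wpair_descent_step u w a :
  inGdual g u -> (forall j, wpair u (g j) = 0 -> wpair w (g j) = 0) ->
  wpair w a = 0 -> forall j1, wpair w (g j1) < 0 ->
  exists u', [/\ inGdual g u', wpair u' a = wpair u a &
    (#|[set j | wpair u' (g j) != 0%R]| < #|[set j | wpair u (g j) != 0%R]|)%N].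
Proof.
move=> Gu wt wa j1 Hj1.
case: (arg_minP (fun j => wpair u (g j) / (- wpair w (g j)))
   (P := [pred j | wpair w (g j) < 0]) Hj1) => j0 /= Hj0 Hmin.
set t := wpair u (g j0) / (- wpair w (g j0)) in Hmin *.
have Gu' := (inGdualP _ _).1 Gu.
have t0 : 0 <= t by rewrite divr_ge0 // oppr_ge0 ltW.
exists (u + t *: w); split.
- apply/inGdualP => j; rewrite wpairDl wpairZl.
  case: (ltP (wpair w (g j)) 0) => Hw; last by rewrite addr_ge0 // mulr_ge0.
  by have := Hmin j Hw; rewrite ler_pdivlMr ?oppr_gt0 //; nra.
- by rewrite wpairDl wpairZl wa mulr0 addr0.
- apply: proper_card; rewrite properE; apply/andP; split.
    apply/subsetP => j; rewrite !inE; apply: contra => /eqP H.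
    by rewrite wpairDl wpairZl H (wt _ H) mulr0 addr0.
  apply/subsetPn; exists j0; rewrite !inE.
    by apply/eqP => H; move: Hj0; rewrite (wt _ H) ltxx.
  by rewrite negbK wpairDl wpairZl /t; apply/eqP; field; rewrite lt_eqF.
Qed.

Lemma exists_extremal_wpair_gt0 a u : inGdual g u -> 0 < wpair u a ->
  exists u', extremal_ray_gen g u' /\ 0 < wpair u' a.
Proof.
have [N] := ubnP #|[set j | wpair u (g j) != 0]|.
elim: N u => // N IH u HN Gu pu.
have u0 : u != 0 by apply: contraTneq pu => ->; rewrite wpair0l ltxx.
set K := kermx (zero_gen_mx u)^T.
have [rK|rK] := leqP (\rank K) 1.
  exists u; split => //.
  exact: (extremal_of_kermx_rank (M := zero_gen_mx u) _ _ (zero_gen_mx_rows u)).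
set K2 := (K :&: kermx a^T)%MS.
have rK2 : (0 < \rank K2)%N.
  have := mxrank_sum_cap K (kermx a^T); have := rank_leq_col (K + kermx a^T)%MS.
  have := mxrank_kermx_tr a; have := rank_leq_row a; rewrite -/K2; lia.
have [i Hi] : exists i, row i K2 != 0.
  have : ~~ (K2 <= (0 : 'M[rat]_n))%MS by rewrite submx0 -mxrank_eq0 -lt0n.
  by case/row_subPn => i; rewrite submx0; exists i.
set v := row i K2 in Hi.
have vt := sub_kermx_zero_gen (submx_trans (row_sub i K2) (capmxSl _ _)).
have va : wpair v a = 0.
  have : (v <= kermx a^T)%MS by apply: submx_trans (row_sub i K2) (capmxSr K _).
  by move/sub_kermx_wpairP/(_ ord0); rewrite rowE [delta_mx _ _]mx11_scalar !mxE /= mul1mx.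
have [j Hj] := exists_wpair_gen_neq0 rank_gen Hi.
have [w [wt wa [j1 Hj1]]] : exists w, [/\ forall j, wpair u (g j) = 0 -> wpair w (g j) = 0,
    wpair w a = 0 & exists j1, wpair w (g j1) < 0].
  case: (ltP (wpair v (g j)) 0) => Hv; first by exists v; split => //; exists j.
  exists (- v); split; first by move=> l /vt; rewrite wpairNl => ->; rewrite oppr0.
    by rewrite wpairNl va oppr0.
  by exists j; rewrite wpairNl oppr_lt0 lt_def Hj.
have [u' [Gu' pu' cu']] := wpair_descent_step Gu wt wa Hj1.
apply: (IH u') => //; last by rewrite pu'.
by apply: leq_trans cu' _; rewrite -ltnS.
Qed.

End ExtremalRays.

Section Primitive.
Variables (n k : nat) (g : 'I_k -> 'rV[rat]_n).
Implicit Types u v w e : 'rV[rat]_n.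
Hypothesis rank_gen : \rank (\matrix_(j < k) g j) = n.
Hypothesis integral_gen : forall j, integral (g j).

Lemma inZG_gen j : inZG g (g j).
Proof.
exists (fun l => (nat_of_bool (l == j))%:Z); rewrite (bigD1 j) //= eqxx scale1r big1 ?addr0 //.
by move=> l /negbTE ->; rewrite scale0r.
Qed.

Lemma integral_inLdual v : integral v -> inLdual g v.
Proof.
move=> vi x [z ->]; rewrite wpair_sumr; apply: is_int_sum => j.
rewrite wpairZr; apply: is_intM; first exact: is_int_intr.
by apply: is_int_sum => l; apply: is_intM; [apply: vi | apply: integral_gen].
Qed.

(* The multiplier [N] is bounded by the integer [|<e, g j>|] for a fixed
   generator with [<e, g j> != 0], so it can only grow finitely often. *)
Lemma primitive_multiple e : inLdual g e -> e != 0 ->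
  exists (N : nat) w, (0 < N)%N /\ primitive_dual g w /\ e = N%:R *: w.
Proof.
move=> Le e0.
have [j Hj] := exists_wpair_gen_neq0 rank_gen e0.
have [z Ez0] := Le _ (inZG_gen j).
have zn0 : z != 0 by apply: contraNneq Hj => z0; rewrite Ez0 z0.
have bound N w : inLdual g w -> e = N%:R *: w -> (N <= `|z|)%N.
  move=> Lw Ew; have [y Ey] := Lw _ (inZG_gen j).
  move: (Ez0); rewrite Ew wpairZl Ey pmulrn -rmorphM => /intr_inj Ez.
  move: zn0; rewrite -Ez abszM /= mulf_eq0 negb_or => /andP [_ y0].
  by rewrite leq_pmulr // absz_gt0.
suff H : forall m N w, (`|z| - N)%N = m -> (0 < N)%N -> inLdual g w -> e = N%:R *: w ->
    exists (N : nat) w, (0 < N)%N /\ primitive_dual g w /\ e = N%:R *: w.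
  by apply: (H _ 1%N e) => //; rewrite scale1r.
elim/ltn_ind => m IH N w Em N0 Lw Ew.
have w0 : w != 0 by apply: contraNneq e0 => w0; rewrite Ew w0 scaler0.
case: (classic (primitive_dual g w)) => Pw; first by exists N, w.
have [w' [m' [Lw' Ew' m1]]] : exists w' (m' : nat),
    [/\ inLdual g w', w = m'%:R *: w' & m' <> 1%N].
  apply: NNPP => Hn; apply: Pw; split; [done | split; first done].
  by move=> w' m' Lw' Ew'; apply: NNPP => m1; apply: Hn; exists w', m'.
have m0 : m' <> 0%N by move=> m00; move: w0; rewrite Ew' m00 scale0r eqxx.
have Ee : e = (N * m')%:R *: w' by rewrite Ew Ew' scalerA natrM.
have := bound _ _ Lw' Ee.
have NN : (N < N * m')%N by rewrite -{1}(muln1 N) ltn_pmul2l //; lia.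
move=> b; refine (IH (`|z| - N * m')%N _ (N * m')%N w' erefl _ Lw' Ee); lia.
Qed.

Lemma extremal_primitive u : extremal_ray_gen g u ->
  exists d, inEG g d /\ exists c, 0 < c /\ u = c *: d.
Proof.
move=> Eu; have [_ [u0 _]] := Eu.
have [z [z0 zi]] := integral_multiple u.
have z0' : (z%:~R : rat) != 0 by rewrite intr_eq0 gt_eqF.
have e0 : z%:~R *: u != 0 by rewrite scaler_eq0 negb_or z0'.
have [N [w [N0 [Pw Ew]]]] := primitive_multiple (integral_inLdual zi) e0.
have N0' : (N%:R : rat) != 0 by rewrite pnatr_eq0 -lt0n.
exists w; split; first split => //.
  have -> : w = (N%:R)^-1 * z%:~R *: u by rewrite -scalerA Ew scalerA mulVf // scale1r.
  by apply: extremalZ; rewrite ?mulr_gt0 ?invr_gt0 ?ltr0n ?ltr0z.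
exists ((z%:~R)^-1 * N%:R); split; first by rewrite mulr_gt0 ?invr_gt0 ?ltr0z ?ltr0n.
by rewrite -scalerA -Ew scalerA mulVf // scale1r.
Qed.

End Primitive.

Section Facets.
Variables (n k : nat) (g : 'I_k -> 'rV[rat]_n).
Implicit Types u v x y d : 'rV[rat]_n.

Definition ray_face d x := inQG g x /\ wpair d x = 0.

Lemma lspan_sub (F : 'rV[rat]_n -> Prop) x : F x -> lspan F x.
Proof.
by move=> Fx; exists 1%N, (fun _ => 1), (fun _ => x); split => //; rewrite big_ord1 scale1r.
Qed.

Lemma lspan_wpair_eq0 (F : 'rV[rat]_n -> Prop) u y :
  (forall x, F x -> wpair u x = 0) -> lspan F y -> wpair u y = 0.
Proof.
move=> H [m [c [f [Ff ->]]]]; rewrite wpair_sumr big1 // => j _.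
by rewrite wpairZr H // mulr0.
Qed.

Hypothesis rank_gen : \rank (\matrix_(j < k) g j) = n.

Lemma facet_ray_face d : extremal_ray_gen g d -> facet g (ray_face d).
Proof.
move=> Ed; have [Gd [d0 _]] := Ed.
split; first by exists d; split => // x; apply: inGdual_wpair_ge0.
set A := zero_gen_mx g d.
have rK := kermx_zero_gen_rank Ed; rewrite -/A in rK.
have dK : (d <= kermx A^T)%MS.
  by apply/sub_kermx_wpairP => j; case: (zero_gen_mx_rows g d j).
have := mxrankS dK; rewrite rank_rV d0 /= => rK1.
have rA := mxrank_kermx_tr A; have rAn := rank_leq_col A.
exists (\rank A); split; first lia.
split.
  exists (rowsub (maxrankfun A) A); split.
    by move=> j; rewrite row_rowsub; apply: zero_gen_mx_rows.
  by apply/eqP; apply: maxrowsub_free.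
move=> M HM.
have dM : (d <= kermx M^T)%MS by apply/sub_kermx_wpairP => j; case: (HM j).
have := mxrankS dM; rewrite rank_rV d0 mxrank_kermx_tr /=; lia.
Qed.

End Facets.

Section Reflection.
Variables (n r : nat) (alpha coalpha : 'I_r -> 'rV[rat]_n) (i : 'I_r).
Implicit Types u x : 'rV[rat]_n.
Local Notation s := (refl_mx alpha coalpha i).

Lemma mul_refl_mx x : x *m s = x - wpair (coalpha i) x *: alpha i.
Proof.
rewrite /refl_mx mulmxBr mulmx1 mulmxA; congr (_ - _).
by rewrite [x *m _]mx11_scalar mul_scalar_mx wpairC wpairE.
Qed.

Lemma wpair_refl_mx u x :
  wpair u (x *m s) = wpair (u - wpair u (alpha i) *: coalpha i) x.
Proof.
rewrite mul_refl_mx wpairBr wpairZr wpairBl wpairZl; congr (_ - _).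
by rewrite mulrC wpairC.
Qed.

Lemma weyl_refl_mx : weyl alpha coalpha s.
Proof. by rewrite -[s]mulmx1; apply: weylS; apply: weyl1. Qed.

Hypothesis coalpha_alpha : wpair (coalpha i) (alpha i) = 2.

Lemma refl_mxK x : x *m s *m s = x.
Proof.
rewrite !mul_refl_mx wpairBr wpairZr coalpha_alpha; apply/rowP => l; rewrite !mxE.
ring.
Qed.

End Reflection.

Section Coordinates.
Variables (n : nat) (B : 'M[rat]_n).
Hypothesis B_free : row_free B.

Lemma scale_rows2E p q a b :
  a *: row p B + b *: row q B = \sum_l (a * (l == p)%:R + b * (l == q)%:R) *: row l B.
Proof.
have sum1 j c : \sum_(l < n) (c * (l == j)%:R) *: row l B = c *: row j B.
  rewrite (bigD1 j) //= eqxx mulr1 big1 ?addr0 // => l /negbTE ->.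
  by rewrite mulr0 scale0r.
by under eq_bigr do rewrite scalerDl; rewrite big_split /= !sum1.
Qed.

Lemma row_free_coordP (a b : 'I_n -> rat) :
  \sum_l a l *: row l B = \sum_l b l *: row l B -> forall l, a l = b l.
Proof.
move=> E l.
have rowE (c : 'I_n -> rat) : \sum_l c l *: row l B = (\row_l c l) *m B.
  by rewrite mulmx_sum_row; apply: eq_bigr => j _; rewrite mxE.
by move: E; rewrite !rowE => /(row_free_inj B_free) /rowP /(_ l); rewrite !mxE.
Qed.

Lemma rows2_coordE (c : 'I_n -> int) m t p q : p != q ->
  m *: \sum_l (c l)%:~R *: row l B = row p B + t *: row q B ->
  m * (c p)%:~R = 1 /\ m * (c q)%:~R = t.
Proof.
move=> pq E.
have := row_free_coordP (a := fun l => m * (c l)%:~R)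
  (b := fun l => 1 * (l == p)%:R + t * (l == q)%:R).
rewrite -scale_rows2E scale1r -E scaler_sumr => H.
have {}H l : m * (c l)%:~R = 1 * (l == p)%:R + t * (l == q)%:R.
  by apply: H; apply: eq_bigr => j _; rewrite scalerA.
split; rewrite H eqxx; first by rewrite (negbTE pq) mulr0 addr0 mulr1.
by rewrite eq_sym (negbTE pq) mulr0 add0r mulr1.
Qed.

End Coordinates.

Section SimpleRoot.
Variables (n r : nat) (alpha coalpha : 'I_r -> 'rV[rat]_n) (k : nat).
Variable g : 'I_k -> 'rV[rat]_n.
Hypothesis root_datum : based_root_datum alpha coalpha.
Hypothesis dominant_gen : forall j, dominant coalpha (g j).
Hypothesis Gamma_reflective : reflective alpha coalpha g.
Hypothesis simple_roots_inZG : forall i, inZG g (alpha i).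
Hypothesis E_basis : E_part_of_basis g.
Variable i : 'I_r.
Implicit Types u v x y d : 'rV[rat]_n.

Let rank_gen : \rank (\matrix_(j < k) g j) = n.
Proof. by case: Gamma_reflective => _ []. Qed.

Let coalpha_alpha : wpair (coalpha i) (alpha i) = 2.
Proof. by case: root_datum => _ [H _]; apply: H. Qed.

Lemma coroot_inLdual : inLdual g (coalpha i).
Proof.
apply: integral_inLdual; first by move=> j; case: (dominant_gen j).
by case: root_datum => [H _]; case: (H i).
Qed.

Lemma coroot_inGdual : inGdual g (coalpha i).
Proof. by apply/inGdualP => j; case: (dominant_gen j) => _; apply. Qed.

Lemma extremal_chamber_point d : extremal_ray_gen g d ->
  exists x, [/\ inQG g x, wpair d x = 0 & 0 < wpair (coalpha i) x].
Proof.
move=> Ed; case: Gamma_reflective => _ [_ [_ H]].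
by have [x [[Qx dx] ox]] := H _ (facet_ray_face rank_gen Ed); exists x; split.
Qed.

Lemma coroot_not_ray m c d : extremal_ray_gen g d -> 0 < m -> m *: coalpha i <> c *: d.
Proof.
move=> Ed m0 E; have [x [_ dx cx]] := extremal_chamber_point Ed.
have := congr1 (fun v => wpair v x) E; rewrite /= !wpairZl dx mulr0.
by move/eqP; rewrite mulf_eq0 !gt_eqF.
Qed.

(* [s_i] maps the facet [d^perp] onto a facet spanning the hyperplane
   [(d - m coalpha_i)^perp]; a point of the chamber fixes the sign. *)
Lemma extremal_coroot_sub d : extremal_ray_gen g d -> 0 < wpair d (alpha i) ->
  extremal_ray_gen g (wpair d (alpha i) *: coalpha i - d).
Proof.
move=> Ed; set m := wpair d (alpha i) => m0.
have [x0 [Qx0 dx0 cx0]] := extremal_chamber_point Ed.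
have [F' [[[u' [u'G Fu']] [d' [Ed' [[M' [M'F rM']] _]]]] HF']] :=
  Gamma_reflective.2.2.1 _ (weyl_refl_mx alpha coalpha i) _ (facet_ray_face rank_gen Ed).
set dl := d - m *: coalpha i.
have dlF x : F' x -> wpair dl x = 0.
  move=> F'x; have [y [Hy Exy]] := (HF' x).1 (lspan_sub F'x).
  have := lspan_wpair_eq0 (fun z (Hz : ray_face g d z) => Hz.2) Hy.
  by rewrite -[y](refl_mxK coalpha_alpha) -Exy wpair_refl_mx.
have dl0 : dl != 0.
  apply/negP; rewrite subr_eq0 => /eqP E.
  by apply: (coroot_not_ray (c := 1) Ed m0); rewrite scale1r.
have dlK : (dl <= kermx M'^T)%MS by apply/sub_kermx_wpairP => j; apply: dlF.
have u'K : (u' <= kermx M'^T)%MS.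
  by apply/sub_kermx_wpairP => j; case: ((Fu' _).1 (M'F j)).
have rK' : (\rank (kermx M'^T) <= 1)%N by rewrite mxrank_kermx_tr rM'; lia.
have [c Ec] := rank1_sub_scale dlK dl0 rK' u'K.
have u'0 : u' != 0.
  apply: contraNneq dl0 => u00; apply/eqP/(wpair_gen_eq0 rank_gen) => j.
  by apply: dlF; apply/Fu'; split; [apply: inQG_gen | rewrite u00 wpair0l].
have Eu' : extremal_ray_gen g u'.
  apply: (extremal_of_kermx_rank rank_gen (M := M')) => // [x Gx | j].
    exact/u'G/inGamma_inQG.
  exact/Fu'.
have c_lt0 : c < 0.
  have c0 : c != 0 by apply: contraNneq u'0 => c0; rewrite Ec c0 scale0r.
  have P0 : 0 < m * wpair (coalpha i) x0 by apply: mulr_gt0.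
  have := inGdual_wpair_ge0 Eu'.1 Qx0.
  rewrite Ec wpairZl /dl wpairBl dx0 wpairZl sub0r lt_neqAle c0 /=.
  by move: P0; set P := m * _; nra.
have -> : m *: coalpha i - d = (- c)^-1 *: u'.
  by rewrite Ec scalerA invrN mulNr mulVf ?lt_eqF // scaleN1r /dl opprB.
by apply: extremalZ => //; rewrite invr_gt0 oppr_gt0.
Qed.

Lemma inEG_wpair_simple_int d : inEG g d -> is_int (wpair d (alpha i)).
Proof. by case=> [[Ld _] _]; apply/Ld/simple_roots_inZG. Qed.

Lemma inEG_coroot_sub d : inEG g d -> 0 < wpair d (alpha i) ->
  wpair d (alpha i) = 1 /\ inEG g (coalpha i - d).
Proof.
move=> Ed mpos; set m := wpair d (alpha i) in mpos *.
have [d2 [Ed2 [t [t0 Eet]]]] :=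
  extremal_primitive rank_gen (fun j => (dominant_gen j).1)
    (extremal_coroot_sub Ed.2 mpos).
have [B [_ [Bfree [Bspan BE]]]] := E_basis.
have [[p Ep] [q Eq]] := (BE d Ed, BE d2 Ed2).
have [c Ec] := Bspan _ coroot_inLdual.
have key : m *: coalpha i = d + t *: d2 by rewrite -Eet addrC subrK.
have pq : p != q.
  apply/negP => /eqP pq; apply: (coroot_not_ray (c := 1 + t) Ed.2 mpos).
  by rewrite key Eq -pq -Ep scalerDl scale1r.
have [Hp Hq] : m * (c p)%:~R = 1 /\ m * (c q)%:~R = t.
  by apply: (rows2_coordE Bfree pq); rewrite -Ec -Ep -Eq.
have m1 : m = 1.
  exact: is_int_mul_eq1 (inEG_wpair_simple_int Ed) (is_int_intr _) mpos Hp.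
rewrite m1 mul1r in Hq.
have t1 : t = 1.
  have t_int : is_int t by rewrite -Hq; apply: is_int_intr.
  apply: (is_int_mul_eq1 t_int (inEG_wpair_simple_int Ed2) t0).
  by rewrite -wpairZl -Eet wpairBl wpairZl coalpha_alpha -/m m1; lra.
split => //; suff -> : coalpha i - d = d2 by [].
by rewrite -[coalpha i]scale1r -m1 Eet t1 scale1r.
Qed.

Lemma coroot_sub_neq d : inEG g d -> coalpha i - d != d.
Proof.
move=> Ed; apply/negP => /eqP E; apply: (coroot_not_ray (m := 1) (c := 2) Ed.2) => //.
by rewrite scale1r -[2]/(1 + 1) scalerDl scale1r -{1}E subrK.
Qed.

Lemma inEG_pair_sum_uniq d d' e1 e2 :
  inEG g d -> inEG g d' -> inEG g e1 -> inEG g e2 ->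
  d != d' -> d + d' = e1 + e2 -> d = e1 \/ d = e2.
Proof.
move=> Ed Ed' Ee1 Ee2 ne E.
have [B [_ [Bfree [_ BE]]]] := E_basis.
have [[p Ep] [q Eq]] := (BE d Ed, BE d' Ed').
have [[p1 Ep1] [q1 Eq1]] := (BE e1 Ee1, BE e2 Ee2).
have pq : p != q by apply: contraNneq ne => pq; rewrite Ep Eq pq.
have := row_free_coordP Bfree (a := fun l => 1 * (l == p)%:R + 1 * (l == q)%:R)
  (b := fun l => 1 * (l == p1)%:R + 1 * (l == q1)%:R).
rewrite -!scale_rows2E !scale1r -Ep -Eq -Ep1 -Eq1 => /(_ E p).
rewrite eqxx (negbTE pq) !mul1r addr0.
case: (eqVneq p p1) => [h1|h1]; first by left; rewrite Ep Ep1 h1.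
case: (eqVneq p q1) => [h2|h2]; first by right; rewrite Ep Eq1 h2.
by rewrite /= addr0 => /eqP; rewrite oner_eq0.
Qed.

Lemma in_a_coroot_sumP d1 d :
  inEG g d1 -> inEG g (coalpha i - d1) -> wpair d1 (alpha i) = 1 ->
  in_a alpha coalpha g i d <-> d = d1 \/ d = coalpha i - d1.
Proof.
move=> Ed1 Ed2 pd1; have sumE x : x + (coalpha i - x) = coalpha i by rewrite addrC subrK.
split.
- move=> [_ [pd [Ed|Ed]]].
    have pd' : 0 < wpair d (alpha i) by rewrite pd ltr01.
    have [_ E2] := inEG_coroot_sub Ed pd'.
    apply: (inEG_pair_sum_uniq Ed E2 Ed1 Ed2); last by rewrite !sumE.
    by rewrite eq_sym coroot_sub_neq.
  have pd' : 0 < wpair (coalpha i - d) (alpha i) by rewrite wpairBl coalpha_alpha pd; lra.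
  have [_ E2] := inEG_coroot_sub Ed pd'.
  rewrite subKr in E2.
  have Es : coalpha i - d + d = d1 + (coalpha i - d1) by rewrite sumE subrK.
  have [h|h] := inEG_pair_sum_uniq Ed E2 Ed1 Ed2 (coroot_sub_neq E2) Es.
    by right; rewrite -h subKr.
  by left; rewrite -(subKr (coalpha i) d) h subKr.
- case=> ->; [have [[L _] _] := Ed1 | have [[L _] _] := Ed2]; do 2!split => //.
  + by left.
  + by rewrite wpairBl coalpha_alpha pd1; lra.
  + by left.
Qed.

End SimpleRoot.

Theorem mainTheorem16 (n r : nat) (alpha coalpha : 'I_r -> 'rV[rat]_n)
    (k : nat) (g : 'I_k -> 'rV[rat]_n) :
  based_root_datum alpha coalpha ->
  (forall j, dominant coalpha (g j)) ->
  reflective alpha coalpha g ->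
  (forall i, inZG g (alpha i)) ->
  E_part_of_basis g ->
  ZG_W_invariant alpha coalpha g ->
  forall i : 'I_r,
    (exists d1 d2 : 'rV[rat]_n,
        d1 != d2 /\
        (forall d, in_a alpha coalpha g i d <-> d = d1 \/ d = d2) /\
        inEG g d1 /\ inEG g d2 /\ coalpha i = d1 + d2) /\
    (forall d, inEG g d -> 0 < wpair d (alpha i) -> wpair d (alpha i) = 1).
Proof.
move=> Hrd Hdom Hrefl HS HE _ i.
have rank_gen : \rank (\matrix_(j < k) g j) = n by case: Hrefl => _ [].
have pair_E_eq1 d (Ed : inEG g d) (pd : 0 < wpair d (alpha i)) :=
  inEG_coroot_sub Hrd Hdom Hrefl HS HE Ed pd.
split; last by move=> d Ed /(pair_E_eq1 d Ed) [].
have pc : 0 < wpair (coalpha i) (alpha i) by case: Hrd => _ [-> _].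
have [u [Eu pu]] := exists_extremal_wpair_gt0 rank_gen (coroot_inGdual Hdom i) pc.
have [d1 [Ed1 [c [c0 Ec]]]] := extremal_primitive rank_gen (fun j => (Hdom j).1) Eu.
have [pd1 Ed2] : wpair d1 (alpha i) = 1 /\ inEG g (coalpha i - d1).
  by apply: pair_E_eq1 => //; move: pu; rewrite Ec wpairZl pmulr_rgt0.
exists d1, (coalpha i - d1); split; first by rewrite eq_sym (coroot_sub_neq Hrefl).
split; first by move=> d; apply: (in_a_coroot_sumP Hrd Hdom Hrefl HS HE).
by split; [|split; [|rewrite addrC subrK]].
Qed.
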